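(* Let $r\geq 1$, let $\mathbf a=(a_1,\ldots,a_r)$ be positive integers, and let $D$ be a positive common multiple of $a_1,\ldots,a_r$. Then for every integer $n\geq 0$, $$f_{\mathbf a}(n) = \frac{1}{(r-1)!} \sum_{j=0}^{\lfloor n/D\rfloor } \binom{r}{j}(-1)^j \sum_{\substack{0\leq j_1\leq \frac{D}{a_1}-1,\ldots, 0\leq j_r\leq \frac{D}{a_r}-1 \\ a_1j_1+\cdots+a_rj_r \equiv n \pmod D}} \prod_{\ell=1}^{r-1} \left(\frac{n-a_1j_{1}- \cdots -a_rj_r}{D}+\ell-j\right),$$ where the inner sum runs over integer tuples $(j_1,\ldots,j_r)$.
   Context: For $n\geq 0$, $f_{\mathbf a}(n)$ denotes the number of integer tuples $(j_1,\ldots,j_r)$ with $a_1j_1+\cdots+a_rj_r=n$ and $0\leq j_k\leq \frac{D}{a_k}-1$ for $1\leq k\leq r$; equivalently, $\sum_{n\geq 0} f_{\mathbf a}(n)z^n=\prod_{i=1}^r\frac{1-z^D}{1-z^{a_i}}$. *)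

From HB Require Import structures.
From mathcomp Require Import all_boot all_order all_algebra.
Set Implicit Arguments. Unset Strict Implicit. Unset Printing Implicit Defensive.
Import Order.TTheory GRing.Theory Num.Theory.

(* Tuples (j_1,...,j_r) with 0 <= j_k <= D/a_k - 1, encoded as finite functions
   'I_r -> 'I_D together with the bound j_k < D %/ a_k (note D/a_k <= D). *)
Definition in_box (r D : nat) (a : 'I_r -> nat) (j : {ffun 'I_r -> 'I_D}) : bool :=
  [forall k, (j k < D %/ a k)%N].

Definition wsum (r D : nat) (a : 'I_r -> nat) (j : {ffun 'I_r -> 'I_D}) : nat :=
  (\sum_(k < r) a k * j k)%N.

Definition f_a (r D : nat) (a : 'I_r -> nat) (n : nat) : nat :=
  #|[set j : {ffun 'I_r -> 'I_D} | in_box a j && (wsum a j == n)]|.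

From mathcomp Require Import all_boot all_order all_algebra.
From mathcomp Require Import ring zify.
Import Order.TTheory GRing.Theory Num.Theory.
Local Open Scope ring_scope.

(* Let w be the weighted sum of a box tuple with w = n (mod D), and write
   n = qD + s, w = tD + s with t < r.  The product over l is then
   P(q - t - i) for the polynomial P(y) = (y+1)(y+2)...(y+r-1) of degree r-1.
   Since P vanishes at -1, ..., -(r-1) and its r-th finite difference is zero,
   sum_(i <= q) (-1)^i C(r,i) P(q - t - i) = (r-1)! [q = t] = (r-1)! [w = n],
   and summing over the tuples counts f_a(n). *)

Section AlternatingBinomialSums.

Variable R : comPzRingType.

Lemma sum_binom_sign_recr r (f : nat -> R) :
  \sum_(i < r.+2) 'C(r.+1, i)%:R * (-1) ^+ i * f i =
  \sum_(i < r.+1) 'C(r, i)%:R * (-1) ^+ i * (f i - f i.+1).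
Proof.
have shiftC : \sum_(i < r.+1) 'C(r, i.+1)%:R * (-1) ^+ i.+1 * f i.+1 =
              \sum_(i < r.+1) 'C(r, i)%:R * (-1) ^+ i * f i - f 0%N.
  have := @big_ord_recr R 0 +%R r.+1 (fun i : 'I_r.+2 => 'C(r, i)%:R * (-1) ^+ i * f i).
  rewrite /= bin_small // !mul0r addr0 big_ord_recl /= bin0 !mul1r => <-.
  by rewrite addrC addrK.
rewrite big_ord_recl /= bin0 !mul1r.
under eq_bigr do rewrite binS natrD mulrDl mulrDl.
rewrite big_split /= shiftC addrCA addrA subrK.
rewrite -big_split; apply: eq_bigr => i _ /=.
rewrite /bump add1n exprS; ring.
Qed.

Definition rise (m : nat) (y : R) : R := \prod_(1 <= l < m) (y + l%:R).

Lemma rise_diff m y : rise m y - rise m (y - 1) = (m.-1)%:R * rise m.-1 y.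
Proof.
case: m => [|[|m]]; rewrite /rise; [by rewrite !big_geq // subrr mul0r.. |].
have -> : \prod_(1 <= l < m.+2) (y - 1 + l%:R) = y * \prod_(1 <= l < m.+1) (y + l%:R).
  rewrite big_nat_recl // subrK; congr (_ * _).
  by apply: eq_bigr => l _; rewrite -addn1 natrD; ring.
rewrite big_nat_recr //=; ring.
Qed.

Lemma sum_binom_sign_rise_eq0 r m x :
  (0 < m <= r)%N -> \sum_(i < r.+1) 'C(r, i)%:R * (-1) ^+ i * rise m (x - i%:R) = 0.
Proof.
elim: r m => [|r IHr] [|m] // /andP[_ le_mr].
rewrite (sum_binom_sign_recr r (fun i => rise m.+1 (x - i%:R))) /=.
under eq_bigr do rewrite -natr1 opprD addrA rise_diff mulrCA.
rewrite -mulr_sumr; case: m le_mr => [|m le_mr]; first by rewrite mul0r.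
by rewrite IHr ?mulr0.
Qed.

Lemma rise_natN_eq0 m k : (0 < k < m)%N -> rise m (- k%:R) = 0.
Proof.
move=> /andP[k_gt0 lt_km]; rewrite /rise (big_cat_nat (n := k)) ?(ltnW lt_km) //=.
by rewrite [X in _ * X]big_ltn // addNr mul0r mulr0.
Qed.

Lemma rise0 m : rise m 0 = (m.-1)`!%:R.
Proof.
rewrite /rise fact_prod natr_prod; case: m => [|m] /=; first by rewrite !big_geq.
by apply: eq_bigr => l _; rewrite add0r.
Qed.

Lemma sum_binom_sign_rise_nat r p : (0 < r)%N ->
  \sum_(0 <= i < p.+1) 'C(r, i)%:R * (-1) ^+ i * rise r (p%:R - i%:R) =
  (r.-1)`!%:R *+ (p == 0).
Proof.
move=> r_gt0; case: p => [|p].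
  by rewrite big_nat1 bin0 !mul1r subrr rise0 mulr1n.
set F : nat -> R := fun i => 'C(r, i)%:R * (-1) ^+ i * rise r (p.+1%:R - i%:R).
have F_binom0 i : (r < i)%N -> F i = 0 by move=> lt_ri; rewrite /F bin_small // !mul0r.
have F_rise0 i : (p.+1 < i < p.+1 + r)%N -> F i = 0.
  move=> lt_i; rewrite /F -opprB -natrB ?rise_natN_eq0 ?mulr0 //; lia.
(* The terms p < i < p + r vanish, so the sum is a full r-th difference of rise r. *)
have -> : \sum_(0 <= i < p.+2) F i = \sum_(0 <= i < p.+1 + r) F i.
  rewrite [RHS](big_cat_nat (n := p.+2)) //=; last by lia.
  rewrite [X in _ = _ + X]big_nat_cond [X in _ = _ + X]big1 ?addr0 // => i /andP[lt_i _].
  by apply: F_rise0; lia.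
rewrite (big_cat_nat (n := r.+1)) //=; last by lia.
rewrite [X in _ + X]big_nat_cond [X in _ + X]big1 => [|i /andP[/andP[lt_ri _] _]].
  rewrite addr0 big_mkord sum_binom_sign_rise_eq0 ?r_gt0 //= mulr0n.
exact: F_binom0.
Qed.

Lemma sum_binom_sign_rise r q t : (t < r)%N ->
  \sum_(0 <= i < q.+1) 'C(r, i)%:R * (-1) ^+ i * rise r (q%:R - t%:R - i%:R) =
  (r.-1)`!%:R *+ (q == t).
Proof.
move=> lt_tr.
have rise_eq0 i : (q < t + i)%N -> (i <= q)%N -> rise r (q%:R - t%:R - i%:R) = 0.
  move=> lt_q le_iq; rewrite -addrA -opprD -natrD -opprB -natrB 1?rise_natN_eq0 //; lia.
case: (ltnP q t) => [lt_qt | le_tq].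
  rewrite (_ : q == t = false) ?mulr0n; last by lia.
  rewrite big_nat_cond big1 // => i /andP[/andP[_ lt_iq] _].
  by rewrite rise_eq0 ?mulr0 //; lia.
rewrite -(subnK le_tq) addnC; set p := (q - t)%N.
rewrite (big_cat_nat (n := p.+1)) //=; last by lia.
rewrite [X in _ + X]big_nat_cond [X in _ + X]big1 => [|i /andP[/andP[lt_pi le_i] _]].
  rewrite addr0 natrD [t%:R + _]addrC addrK sum_binom_sign_rise_nat; last by lia.
  by congr (_ *+ _); apply/eqP/eqP; lia.
by rewrite /p subnKC // rise_eq0 ?mulr0 //; lia.
Qed.

End AlternatingBinomialSums.

Arguments rise {R} m y.

Lemma eqn_div_eqmod m n d : (m = n %[mod d] -> (m %/ d == n %/ d) = (m == n))%N.
Proof.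
move=> eq_mod; apply/eqP/eqP => [eq_div | -> //].
by rewrite (divn_eq m d) (divn_eq n d) eq_div eq_mod.
Qed.

Lemma intr_subn_div_eqmod (R : numFieldType) m n d : (0 < d)%N -> (m = n %[mod d])%N ->
  (m%:Z - n%:Z)%:~R / d%:R = (m %/ d)%:R - (n %/ d)%:R :> R.
Proof.
move=> d_gt0 eq_mod; have d_neq0 : d%:R != 0 :> R by rewrite pnatr_eq0 -lt0n.
rewrite [in LHS](divn_eq m d) [in LHS](divn_eq n d) eq_mod intrB.
rewrite -!pmulrn !natrD !natrM; apply: (mulIf d_neq0).
by rewrite mulfVK //; ring.
Qed.

Section Box.

Variables (r D : nat) (a : 'I_r -> nat).

Lemma wsum_box_lt (j : {ffun 'I_r -> 'I_D}) :
  (0 < r)%N -> (forall k, a k %| D)%N -> in_box a j -> (wsum a j < r * D)%N.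
Proof.
move=> r_gt0 a_dvd_D /forallP box_j.
have D_gt0 : (0 < D)%N by case: (j (Ordinal r_gt0)) => i; lia.
apply: (@leq_ltn_trans (\sum_(k < r) D.-1)%N).
  apply: leq_sum => k _; rewrite -ltnS prednK // mulnC -ltn_divRL //; exact: box_j.
by rewrite sum_nat_const card_ord ltn_pmul2l // prednK.
Qed.

Lemma f_a_sum_eqmod n :
  (f_a D a n = \sum_(j : {ffun 'I_r -> 'I_D} | in_box a j && (wsum a j == n %[mod D]))
    (wsum a j == n))%N.
Proof.
rewrite /f_a cardsE -sum1_card [RHS]big_mkcond [LHS]big_mkcond /=.
apply: eq_bigr => j _; rewrite unfold_in /=.
by case: (in_box a j); case: eqP => [-> | _]; rewrite /= ?eqxx ?if_same.
Qed.

End Box.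

Theorem proposition2p1 (r : nat) (a : 'I_r -> nat) (D : nat) (n : nat) :
  (1 <= r)%N ->
  (forall k, (0 < a k)%N) ->
  (0 < D)%N ->
  (forall k, (a k %| D)%N) ->
  (f_a D a n)%:R =
    ((r.-1)`!%:R)^-1 *
    \sum_(0 <= i < (n %/ D).+1)
      ('C(r, i)%:R * (-1) ^+ i *
       \sum_(j : {ffun 'I_r -> 'I_D} | in_box a j && (wsum a j == n %[mod D]))
         \prod_(1 <= l < r)
           (((n%:Z - (wsum a j)%:Z)%:~R / D%:R : rat) + l%:R - i%:R)).
Proof.
move=> r_gt0 _ D_gt0 a_dvd_D.
have fact_neq0 : (r.-1)`!%:R != 0 :> rat by rewrite pnatr_eq0 -lt0n fact_gt0.
rewrite f_a_sum_eqmod -(mulKf fact_neq0 _%:R) mulr_natr -sumrMnr; congr (_ * _).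
have prod_eq_rise i (j : {ffun 'I_r -> 'I_D}) : (wsum a j = n %[mod D])%N ->
    \prod_(1 <= l < r) (((n%:Z - (wsum a j)%:Z)%:~R / D%:R : rat) + l%:R - i%:R) =
    rise r ((n %/ D)%:R - (wsum a j %/ D)%:R - i%:R).
  move=> eq_mod; rewrite intr_subn_div_eqmod //; apply: eq_bigr => l _; exact: addrAC.
under [RHS]eq_bigr => i _ do rewrite mulr_sumr.
rewrite [RHS]exchange_big /=; apply: eq_bigr => j /andP[box_j /eqP eq_mod].
under eq_bigr => i _ do rewrite (prod_eq_rise i j eq_mod).
rewrite sum_binom_sign_rise ?ltn_divLR ?wsum_box_lt // eq_sym eqn_div_eqmod //.
Qed.
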